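(* Let $p\geq 1$ and let $A$ be a non-empty set. Then for each $g\in\ell^p(A)$, the set $$\Gamma_g:=\big\{f\in\ell^p(A):\ |f|\geq|g|\big\}$$ is not $\sigma$-porous in $\ell^p(A)$.
   Context: $\ell^p(A)$ is $L^p$ of $A$ with counting measure. Porosity: Let $X$ be a metric space and $0<\lambda<1$. A set $E\subseteq X$ is $\lambda$-porous at $x\in E$ if for each $\delta>0$ there is $y\in B(x;\delta)\setminus\{x\}$ with $B(y;\lambda\, d(x,y))\cap E=\varnothing$; $E$ is $\lambda$-porous if it is $\lambda$-porous at each of its points; $E$ is $\sigma$-$\lambda$-porous if it is a countable union of $\lambda$-porous subsets of $X$. A set is called $\sigma$-porous if it is $\sigma$-$\lambda$-porous for some $\lambda\in(0,1)$; ''not $\sigma$-porous'' means not $\sigma$-$\lambda$-porous for any $\lambda\in(0,1)$. *)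

From HB Require Import structures.
From mathcomp Require Import all_boot all_order all_algebra.
From mathcomp Require Import all_classical all_reals all_analysis.
Unset Printing Implicit Defensive.
Import Order.TTheory GRing.Theory Num.Theory.
Local Open Scope classical_set_scope.
Local Open Scope ring_scope.

Definition lp (R : realType) (p : R) (A : choiceType) : set (A -> R) :=
  [set f | (\esum_(a in [set: A]) (`|f a| `^ p)%:E < +oo)%E].

Arguments lp {R} p A.

Definition lpdist (R : realType) (p : R) (A : choiceType) (f g : A -> R) : R :=
  (fine (\esum_(a in [set: A]) (`|f a - g a| `^ p)%:E)) `^ (p^-1).

Arguments lpdist {R} p {A} f g.

Definition porous_at (R : realType) (p : R) (A : choiceType) (lam : R)
    (E : set (A -> R)) (x : A -> R) : Prop :=
  forall delta : R, 0 < delta ->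
    exists y : A -> R, [/\ lp p A y, lpdist p x y < delta, y <> x &
      forall z, lp p A z -> lpdist p y z < lam * lpdist p x y -> ~ E z].

Arguments porous_at {R} p {A} lam E x.

Definition porous (R : realType) (p : R) (A : choiceType) (lam : R)
    (E : set (A -> R)) : Prop :=
  forall x, E x -> porous_at p lam E x.

Arguments porous {R} p {A} lam E.

Definition sigma_porous (R : realType) (p : R) (A : choiceType) (lam : R)
    (E : set (A -> R)) : Prop :=
  exists En : nat -> set (A -> R),
    (forall n, En n `<=` lp p A) /\ (forall n, porous p lam (En n)) /\
    E = \bigcup_n En n.

Arguments sigma_porous {R} p {A} lam E.

Definition Gamma (R : realType) (p : R) (A : choiceType) (g : A -> R) : set (A -> R) :=
  [set f | lp p A f /\ forall a, `|g a| <= `|f a|].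

Arguments Gamma {R} p {A} g.

From HB Require Import structures.
From mathcomp Require Import all_boot all_order all_algebra.
From mathcomp Require Import all_classical all_reals all_analysis.
From mathcomp Require Import ring lra.
Import Order.TTheory GRing.Theory Num.Theory numFieldNormedType.Exports.
Local Open Scope classical_set_scope.
Local Open Scope ring_scope.

(* Write d(f, g) = sum_a |f a - g a|^p: the p-th power of the l^p distance, a
   quasi-metric whose triangle inequality holds up to the factor 2^p.  For
   t >= 0 in l^p let F_t = {x in l^p | t <= |x|}, so that Gamma_g = F_|g|.
   Given lam-porous sets E_n, build thresholds |g| <= t_0 <= t_1 <= ..., points
   x_n in F_(t_n) and radii rho_n -> 0 with nested balls B(x_n, rho_n) such that
   B(x_(n+1), rho_(n+1)) /\ F_(t_(n+1)) misses E_n.  The coordinatewise limit of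
   the x_n lies in every F_(t_n), hence in Gamma_g, and in no E_n.
   For one step, raise t at small cost (t is in l^p) to some t' exceeding t on
   each coordinate by a factor W or by a margin m, and move x into F_t'.  If E_n
   has no point of F_t' near x we are done.  Otherwise porosity at such a point
   e gives y near e with B(y, lam d(e,y)) disjoint from E_n; as e lies well
   above the level t, the nearest point z of F_t to y has d(y,z) <= d(e,y)/W^p,
   so for W large a small ball around z meets F_t only inside that hole. *)

Lemma cauchy_lim_bound {R : realType} (u r : nat -> R) :
  (forall k j, (k <= j)%N -> `|u j - u k| <= r k) ->
  (forall e, 0 < e -> exists k, r k < e) ->
  exists l : R, forall k, `|l - u k| <= r k.
Proof.
move=> ur r0.
have cu : cauchy (u @ \oo).
  apply: cauchy_exP => e e0; have [k rk] := r0 e e0.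
  exists (u k); exists k => // n /= kn.
  by rewrite /ball /= distrC; exact: le_lt_trans (ur _ _ kn) rk.
have cv : cvgn u by apply: R_complete.
exists (lim (u @ \oo)) => k.
have : ([set y : R | u k - r k <= y] `&` [set y | y <= u k + r k]) (lim (u @ \oo)).
  apply: (closed_cvg _ _ _ _ cv).
  - by apply: closedI; [exact: closed_ge | exact: closed_le].
  - exists k => // n /= kn; move: (ur _ _ kn); rewrite ler_norml => /andP[a b].
    split => /=; lra.
by move=> [/= h1 h2]; rewrite ler_norml; apply/andP; split; lra.
Qed.

Lemma exists_invS_le {R : realType} {e : R} (K : nat) : 0 < e ->
  exists2 k, (K <= k)%N & k.+1%:R^-1 <= e.
Proof.
move=> e0; have := archi_boundP (_ : 0 <= e^-1); rewrite invr_ge0 ltW // => /(_ isT).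
set N := Num.Def.archi_bound _ => hN.
exists (maxn K N); first exact: leq_maxl.
rewrite invf_ple ?posrE ?ltr0Sn //; apply: (le_trans (ltW hN)).
by rewrite ler_nat (leq_trans (leq_maxr K N)).
Qed.

Lemma fsumr_cst {R : realType} {T : choiceType} (X : set T) (c : R) :
  \sum_(i \in X) c = c * \sum_(i \in X) (1 : R).
Proof. by rewrite mulr_fsumr; under [RHS]eq_fsbigr do rewrite mulr1. Qed.

Lemma esum_mulr_le {R : realType} {T : choiceType} {S : set T} {F : T -> \bar R}
    {c : R} : (forall i, 0 <= F i)%E -> 0 <= c ->
  (\esum_(i in S) (c%:E * F i) <= c%:E * \esum_(i in S) F i)%E.
Proof.
move=> F0 c0; apply: ge_ereal_sup => _ [X XS <-] /=.
rewrite -ge0_mule_fsumr //; apply: lee_wpmul2l; first by rewrite lee_fin.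
by apply: ereal_sup_ubound; exists X.
Qed.

Lemma ltr_powR2r {R : realType} {r a b : R} : 0 < r -> 0 <= a -> 0 <= b ->
  (a `^ r < b `^ r) = (a < b).
Proof.
move=> r0 a0 b0; apply/idP/idP => [|ab]; last exact: gt0_ltr_powR.
by apply: contraTT; rewrite -!leNgt => ba; apply: ge0_ler_powR => //; exact: ltW.
Qed.

Lemma normD_powR_le {R : realType} (p u v : R) : 0 <= p ->
  `|u + v| `^ p <= 2 `^ p * (`|u| `^ p + `|v| `^ p).
Proof.
move=> p0.
suff key a b : 0 <= b <= a -> (a + b) `^ p <= 2 `^ p * (a `^ p + b `^ p).
  apply: (@le_trans _ _ ((`|u| + `|v|) `^ p)).
    by apply: ge0_ler_powR; rewrite ?nnegrE ?addr_ge0 ?ler_normD.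
  have [uv|vu] := leP `|v| `|u|; first by apply: key; rewrite normr_ge0 uv.
  by rewrite addrC [_ `^ p + _]addrC; apply: key; rewrite normr_ge0 ltW.
move=> /andP[b0 ba]; have a0 := le_trans b0 ba.
apply: (@le_trans _ _ ((2 * a) `^ p)).
  by apply: ge0_ler_powR; rewrite ?nnegrE ?addr_ge0 ?mulr_ge0 // mulr2n mulrDl mul1r lerD2l.
by rewrite powRM ?ler0n // ler_wpM2l ?powR_ge0 // lerDl powR_ge0.
Qed.

Definition nearest_above {R : realFieldType} (t y : R) : R :=
  if t <= `|y| then y else if 0 <= y then t else - t.

Lemma nearest_aboveP {R : realFieldType} (t e y W m : R) : 1 <= W -> 0 <= t ->
    W * t <= `|e| \/ t + m <= `|e| -> `|e - y| < m ->
  [/\ W * `|y - nearest_above t y| <= `|e - y|, t <= `|nearest_above t y|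
    & `|nearest_above t y| <= `|y| + t].
Proof.
move=> W1 t0 te ey; rewrite /nearest_above; have := lerB_dist e y.
have [ty _|yt] := leP t `|y|; first by rewrite subrr normr0 mulr0 normr_ge0 ty lerDl.
have [y0|y0] := leP 0 y.
- have yW : y <= W * y by rewrite ler_peMl.
  rewrite (ger0_norm y0) in yt; rewrite (ger0_norm t0) (ger0_norm y0) [`|y - t|]distrC.
  rewrite (ger0_norm (_ : 0 <= t - y)) ?mulrBr => [ey'|]; last lra.
  by split; [case: te; lra | lra | lra].
- have yW : W * y <= y by rewrite ler_neMl // ltW.
  rewrite (ltr0_norm y0) in yt; rewrite !normrN (ger0_norm t0) (ltr0_norm y0) opprK.
  rewrite opprK (ger0_norm (_ : 0 <= y + t)) ?mulrDr => [ey'|]; last lra.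
  by split; [case: te; lra | lra | lra].
Qed.

Lemma le_norm_pointwise_lim {R : realType} (t x : nat -> R) (l : R) :
    (forall k, t k <= t k.+1) -> (forall k, t k <= `|x k|) ->
    (forall k, `|l - x k.+1| <= k.+1%:R^-1) ->
  forall k, t k <= `|l|.
Proof.
move=> /nondecreasing_seqP t_nd tx lx k; apply/ler_addgt0Pr => e e0.
have [j kj je] := exists_invS_le k e0.
apply: le_trans (t_nd _ _ (leqW kj)) _; apply: le_trans (tx _) _.
rewrite -[x j.+1](subrKC l) (le_trans (ler_normD _ _)) // lerD2l distrC.
exact: le_trans (lx j) je.
Qed.

Section lp_quasi_metric.
Context {R : realType} {p : R} {A : choiceType}.
Hypothesis p_gt0 : 0 < p.

Local Notation C := (2 `^ p : R).

Lemma powR2_ge1 : 1 <= C.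
Proof. by have := @ler_powR _ 2 (ler1n _ 2) 0 p (ltW p_gt0); rewrite powRr0. Qed.

Lemma ler_powRp (a b : R) : 0 <= a -> a <= b -> a `^ p <= b `^ p.
Proof. by move=> a0 ab; apply: ge0_ler_powR; rewrite ?nnegrE ?(ltW p_gt0) ?(le_trans a0). Qed.

Lemma powRVpK {d : R} : 0 <= d -> (d `^ p^-1) `^ p = d.
Proof. by move=> d0; rewrite -powRrM mulVf ?gt_eqF // powRr1. Qed.

Lemma powRpVK {d : R} : 0 <= d -> (d `^ p) `^ p^-1 = d.
Proof. by move=> d0; rewrite -powRrM mulfV ?gt_eqF // powRr1. Qed.

Definition elpdistp (f g : A -> R) : \bar R :=
  \esum_(a in [set: A]) (`|f a - g a| `^ p)%:E.

(* [lpdist p f g = lpdistp f g `^ p^-1]; [lpdistp] is meaningful (finite) only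
   on l^p, where [fine] is the identity. *)
Definition lpdistp (f g : A -> R) : R := fine (elpdistp f g).

Lemma elpdistp_ge0 f g : (0 <= elpdistp f g)%E.
Proof. by apply: esum_ge0 => a _; rewrite lee_fin powR_ge0. Qed.

Lemma elpdistpC f g : elpdistp f g = elpdistp g f.
Proof. by apply: eq_esum => a _; rewrite distrC. Qed.

Lemma elpdistp_term_le f g a : ((`|f a - g a| `^ p)%:E <= elpdistp f g)%E.
Proof.
apply: esum_ge; exists [set a]; first by split => //; exact: finite_set1.
by rewrite fsbig_set1.
Qed.

Lemma elpdistp_le_esum f g (F : A -> R) (c : R) : 0 <= c -> (forall a, 0 <= F a) ->
    (forall a, `|f a - g a| `^ p <= c * F a) ->
  (elpdistp f g <= c%:E * \esum_(a in [set: A]) (F a)%:E)%E.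
Proof.
move=> c0 F0 fgF.
have F0E a : (0 <= (F a)%:E)%E by rewrite lee_fin.
apply: le_trans (esum_mulr_le F0E c0).
by apply: le_esum => a _; rewrite -EFinM lee_fin.
Qed.

Lemma elpdistp_le_sum2 f g u u' v v' (c : R) : 0 <= c ->
    (forall a, `|f a - g a| `^ p <= c * (`|u a - u' a| `^ p + `|v a - v' a| `^ p)) ->
  (elpdistp f g <= c%:E * (elpdistp u u' + elpdistp v v'))%E.
Proof.
move=> c0 fg; rewrite /elpdistp -esumD; last 2 first.
- by move=> a _; rewrite lee_fin powR_ge0.
- by move=> a _; rewrite lee_fin powR_ge0.
under [X in (_ <= _ * X)%E]eq_esum do rewrite -EFinD.
by apply: elpdistp_le_esum => // a; rewrite addr_ge0 ?powR_ge0.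
Qed.

Lemma elpdistp_triangle f g h :
  (elpdistp f h <= C%:E * (elpdistp f g + elpdistp g h))%E.
Proof.
apply: elpdistp_le_sum2 => [|a]; first exact: powR_ge0.
by have := normD_powR_le p (f a - g a) (g a - h a) (ltW p_gt0); rewrite addrA subrK.
Qed.

Lemma lp_elpdistp0 f : lp p A f <-> (elpdistp f (fun=> 0%R) < +oo)%E.
Proof.
by rewrite /lp /elpdistp /=; under [X in (X < _)%E <-> _]eq_esum do rewrite -[f _]subr0.
Qed.

Lemma lp_le_normD f g1 g2 : (forall a, `|f a| <= `|g1 a| + `|g2 a|) ->
  lp p A g1 -> lp p A g2 -> lp p A f.
Proof.
move=> fg /lp_elpdistp0 l1 /lp_elpdistp0 l2; apply/lp_elpdistp0.
apply: le_lt_trans (@elpdistp_le_sum2 _ _ g1 (fun=> 0%R) g2 (fun=> 0%R) C _ _) _.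
- exact: powR_ge0.
- move=> a /=; rewrite !subr0; apply: le_trans (ler_powRp _ _ (normr_ge0 _) (fg a)) _.
  by have := normD_powR_le p `|g1 a| `|g2 a| (ltW p_gt0); rewrite !normr_id ger0_norm ?addr_ge0.
by apply: lte_mul_pinfty; rewrite ?lee_fin ?powR_ge0 ?lte_add_pinfty.
Qed.

Lemma elpdistp_fin f g : lp p A f -> lp p A g -> elpdistp f g \is a fin_num.
Proof.
move=> /lp_elpdistp0 lf /lp_elpdistp0 lg; rewrite ge0_fin_numE ?elpdistp_ge0 //.
apply: le_lt_trans (elpdistp_triangle f (fun=> 0%R) g) _.
rewrite elpdistpC in lg.
by apply: lte_mul_pinfty; rewrite ?lee_fin ?powR_ge0 ?lte_add_pinfty.
Qed.

Lemma lpdistpE f g : lp p A f -> lp p A g -> elpdistp f g = (lpdistp f g)%:E.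
Proof. by move=> lf lg; rewrite fineK // elpdistp_fin. Qed.

Lemma lpdistp_ge0 f g : 0 <= lpdistp f g.
Proof. exact/fine_ge0/elpdistp_ge0. Qed.

Lemma lpdistpxx f : lpdistp f f = 0.
Proof.
rewrite /lpdistp /elpdistp esum1 // => a _.
by rewrite subrr normr0 powR0 // gt_eqF.
Qed.

Lemma lpdistp_eq f g u v : (forall a, `|f a - g a| = `|u a - v a|) ->
  lpdistp f g = lpdistp u v.
Proof. by move=> fg; rewrite /lpdistp /elpdistp; under eq_esum do rewrite fg. Qed.

Lemma lpdist_ltE {f g} {r : R} : 0 <= r -> (lpdist p f g < r) = (lpdistp f g < r `^ p).
Proof.
move=> r0; rewrite /lpdist -[X in _ < X](powRpVK r0).
by rewrite ltr_powR2r ?invr_gt0 ?powR_ge0 ?lpdistp_ge0.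
Qed.

Lemma lpdist_lt_mul {f g h} {lam : R} : 0 < lam ->
  lpdistp g h < lam `^ p * lpdistp f g -> lpdist p g h < lam * lpdist p f g.
Proof.
move=> lam0 ghfg; rewrite /lpdist -[X in X * _](powRpVK (ltW lam0)).
by rewrite -powRM ?powR_ge0 ?lpdistp_ge0 // ltr_powR2r ?invr_gt0 ?mulr_ge0 ?powR_ge0 ?lpdistp_ge0.
Qed.

Section lp_points.
Context {f g h : A -> R}.
Hypotheses (lf : lp p A f) (lg : lp p A g) (lh : lp p A h).

Lemma lpdistp_term_le a : `|f a - g a| `^ p <= lpdistp f g.
Proof. by have := elpdistp_term_le f g a; rewrite lpdistpE // lee_fin. Qed.

Lemma lpdistp_gt0 : f <> g -> 0 < lpdistp f g.
Proof.
move=> fg; have [a fga] : exists a, f a != g a.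
  apply: contra_notP fg => /forallNP fg; apply/funext => a.
  by apply/eqP/negbNE/negP/fg.
by apply: lt_le_trans (lpdistp_term_le a); rewrite powR_gt0 // normr_gt0 subr_eq0.
Qed.

Lemma lpdistp_triangle : lpdistp f h <= C * (lpdistp f g + lpdistp g h).
Proof.
have := elpdistp_triangle f g h.
by rewrite !lpdistpE // -EFinD -EFinM lee_fin.
Qed.

Lemma lpdistp_lt_trans {r : R} :
  lpdistp f g < r -> lpdistp g h < r -> lpdistp f h < 2 * C * r.
Proof.
move=> fg gh; apply: le_lt_trans lpdistp_triangle _.
by rewrite [2 * C]mulrC -mulrA ltr_pM2l ?powR_gt0 // mulr2n mulrDl mul1r ltrD.
Qed.

Lemma lpdistp_le_scale u v (c : R) : 0 <= c -> lp p A u -> lp p A v ->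
  (forall a, `|f a - g a| `^ p <= c * `|u a - v a| `^ p) -> lpdistp f g <= c * lpdistp u v.
Proof.
move=> c0 lu lv fg; have := elpdistp_le_esum _ _ _ _ c0 (fun a => powR_ge0 _ _) fg.
by rewrite -/(elpdistp u v) !lpdistpE // -EFinM lee_fin.
Qed.

End lp_points.
End lp_quasi_metric.

Arguments elpdistp {R} p {A}.
Arguments lpdistp {R} p {A}.

Definition lp_above {R : realType} (p : R) {A : choiceType} (t : A -> R) :
  set (A -> R) := [set x | lp p A x /\ forall a, t a <= `|x a|].

Section lp_porous.
Context {R : realType} {p : R} {A : choiceType}.
Hypothesis p_gt0 : 0 < p.
Local Notation C := (2 `^ p : R).
Local Notation d := (lpdistp p).

Lemma lp_tail_small {t} {eps : R} : lp p A t -> 0 < eps ->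
  exists2 K, finite_set K & (\esum_(a in ~` K) (`|t a| `^ p)%:E < eps%:E)%E.
Proof.
move=> lt e0; pose F a := (`|t a| `^ p)%:E.
have F0 a : (0 <= F a)%E by rewrite lee_fin powR_ge0.
have Sfin : \esum_(a in [set: A]) F a \is a fin_num.
  by rewrite ge0_fin_numE //; apply: esum_ge0.
have : (\esum_(a in [set: A]) F a - eps%:E < \esum_(a in [set: A]) F a)%E.
  by rewrite lteBlDr // lteDl // lte_fin.
move/ereal_sup_gt => [_ [K [finK _] <-]] SKgt; exists K => //.
have := esumID K [set: A] F (fun a _ => F0 a).
rewrite !setTI (esum_fset finK) => [|a _]; last exact: F0.
set sK := (\sum_(a \in K) F a)%E; set tail := (\esum_(a in ~` K) F a)%E => SE.
have sK0 : (0 <= sK)%E by apply: fsume_ge0 => a _.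
have tail0 : (0 <= tail)%E by apply: esum_ge0.
have sKtail : (sK + tail)%E \is a fin_num by rewrite -SE ge0_fin_numE ?esum_ge0.
have [sKf tailf] : sK \is a fin_num /\ tail \is a fin_num.
  by apply/andP; rewrite -fin_numD.
move: SKgt; rewrite -/sK SE -(fineK sKf) -(fineK tailf) -!EFinD !lte_fin; lra.
Qed.

Definition raise_threshold_on (K : set A) (m W : R) (t : A -> R) (a : A) : R :=
  if a \in K then t a + m else W * t a.

Lemma elpdistp_raise_threshold_on {K} {m W : R} {t} : finite_set K -> 0 <= m -> 1 <= W ->
    (forall a, 0 <= t a) ->
  (elpdistp p (raise_threshold_on K m W t) t <= (m `^ p * \sum_(a \in K) (1 : R))%:E
     + (W `^ p)%:E * \esum_(a in ~` K) (`|t a| `^ p)%:E)%E.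
Proof.
move=> finK m0 W1 t0; have W0 : 0 <= W := le_trans ler01 W1.
have tp0 a : (0 <= (`|t a| `^ p)%:E)%E by rewrite lee_fin powR_ge0.
rewrite /elpdistp (esumID K) => [|a _]; last by rewrite lee_fin powR_ge0.
rewrite !setTI; apply: leeD.
  rewrite (esum_fset finK) => [|a _]; last by rewrite lee_fin powR_ge0.
  rewrite (eq_fsbigr (fun=> (m `^ p)%:E)) => [|a /set_mem Ka]; last first.
    by rewrite /raise_threshold_on (mem_set Ka) addrAC subrr add0r ger0_norm.
  by rewrite fsumEFin // -fsumr_cst.
apply: le_trans (esum_mulr_le tp0 (powR_ge0 W p)).
apply: le_esum => a /= Ka; rewrite /raise_threshold_on memNset // -EFinM lee_fin.
rewrite -powRM // (ler_powRp p_gt0) // (ger0_norm (t0 a)) ger0_norm ?subr_ge0 ?ler_peMl //.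
by rewrite gerBl.
Qed.

Lemma raise_threshold {t} {W eps : R} : lp p A t -> (forall a, 0 <= t a) ->
    1 <= W -> 0 < eps ->
  exists t1 m, [/\ 0 < m, lp p A t1, (forall a, t a <= t1 a),
    (forall a, W * t a <= t1 a \/ t a + m <= t1 a) & d t1 t < eps].
Proof.
move=> lt t0 W1 e0; have Wp0 : 0 < W `^ p by rewrite powR_gt0 // (lt_le_trans ltr01 W1).
have [K finK tailK] := lp_tail_small lt (divr_gt0 e0 (mulr_gt0 (ltr0n _ 2) Wp0)).
pose N := \sum_(i \in K) (1 : R).
have N1 : 0 < N + 1 by rewrite ltr_wpDl ?fsumr_ge0.
pose m := (eps / (2 * (N + 1))) `^ p^-1.
have mp : m `^ p = eps / (2 * (N + 1)) by rewrite (powRVpK p_gt0) // ltW // divr_gt0 // mulr_gt0.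
have m0 : 0 < m by rewrite powR_gt0 // divr_gt0 // mulr_gt0.
pose t1 := raise_threshold_on K m W t.
have tt1 a : t a <= t1 a.
  by rewrite /t1 /raise_threshold_on; case: ifP => _; [rewrite lerDl ltW | rewrite ler_peMl].
have Dt1 : (elpdistp p t1 t < eps%:E)%E.
  apply: le_lt_trans (elpdistp_raise_threshold_on finK (ltW m0) W1 t0) _.
  rewrite (splitr eps) EFinD; apply: lee_ltD => //; rewrite -/N.
    rewrite lee_fin mp (_ : eps / (2 * (N + 1)) * N = eps / 2 * (N / (N + 1))).
      by rewrite ler_piMr ?divr_ge0 ?fsumr_ge0 ?(ltW e0) // ler_pdivrMr // mul1r lerDl.
    by field; rewrite gt_eqF.
  rewrite (_ : eps / 2 = W `^ p * (eps / (2 * W `^ p))); last by field; rewrite gt_eqF.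
  by rewrite EFinM lte_pmul2l ?lte_fin.
have lt1 : lp p A t1.
  apply: (lp_le_normD p_gt0 _ t (fun a => t1 a - t a)) => // [a|].
    by rewrite -{1}(subrK (t a) (t1 a)) addrC ler_normD.
  apply/lp_elpdistp0; rewrite /elpdistp; under eq_esum do rewrite subr0.
  exact: lt_trans Dt1 (ltry _).
exists t1, m; split => // [a|]; first by rewrite /t1 /raise_threshold_on; case: ifP; [right | left].
by rewrite -lte_fin -lpdistpE.
Qed.

Lemma lift_to_threshold {t t1 x} : lp p A t1 -> (forall a, 0 <= t a) ->
    (forall a, t a <= t1 a) -> lp_above p t x ->
  exists2 x1, lp_above p t1 x1 & d x x1 = d t1 t.
Proof.
move=> lt1 t0 tt1 [lx tx].
pose x1 a := x a + (if 0 <= x a then t1 a - t a else t a - t1 a).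
have nx1 a : `|x1 a| = `|x a| + (t1 a - t a).
  rewrite /x1; have := tt1 a; have [x0 tt|x0 tt] := leP 0 (x a).
    by rewrite !ger0_norm // addr_ge0 // subr_ge0.
  rewrite (ltr0_norm x0) ltr0_norm; lra.
exists x1.
  split => [|a]; last by rewrite nx1; have := tx a; have := tt1 a; lra.
  apply: (lp_le_normD p_gt0 _ x t1) => // a.
  by rewrite nx1 lerD2l ger0_norm ?gerBl ?(le_trans (t0 a) (tt1 a)).
apply: lpdistp_eq => a; rewrite /x1 opprD addrA subrr add0r normrN.
by case: ifP => _; rewrite // distrC.
Qed.

Lemma project_to_threshold {t t1} {W m : R} {e y} : lp p A t -> (forall a, 0 <= t a) ->
    1 <= W -> 0 < m -> (forall a, W * t a <= t1 a \/ t a + m <= t1 a) ->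
    lp_above p t1 e -> lp p A y -> d e y < m `^ p ->
  exists2 z, lp_above p t z & d y z <= (W `^ p)^-1 * d e y.
Proof.
move=> lt t0 W1 m0 Wt [le te] ly dey; have W0 : 0 < W := lt_le_trans ltr01 W1.
pose z a := nearest_above (t a) (y a).
have hz a : [/\ W * `|y a - z a| <= `|e a - y a|, t a <= `|z a| & `|z a| <= `|y a| + t a].
  apply: nearest_aboveP => //.
    by case: (Wt a) => h; [left | right]; apply: le_trans h (te a).
  rewrite -(ltr_powR2r p_gt0) ?(ltW m0) //.
  exact: le_lt_trans (lpdistp_term_le p_gt0 le ly a) dey.
have lz : lp p A z.
  apply: (lp_le_normD p_gt0 _ y t) => // a.
  by case: (hz a) => _ _; rewrite (ger0_norm (t0 a)).
exists z; first by split => // a; case: (hz a).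
apply: (lpdistp_le_scale p_gt0 ly lz) => // [|a]; first by rewrite invr_ge0 powR_ge0.
rewrite ler_pdivlMl ?powR_gt0 // -powRM ?(ltW W0) //.
by apply: (ler_powRp p_gt0); [rewrite mulr_ge0 ?(ltW W0) | case: (hz a)].
Qed.

Lemma porous_hole_above {E} {lam : R} {t t1} {W m rho : R} {e} :
    0 < lam -> porous_at p lam E e -> lp p A t -> (forall a, 0 <= t a) ->
    1 <= W -> 2 * C <= lam `^ p * W `^ p -> 0 < m ->
    (forall a, W * t a <= t1 a \/ t a + m <= t1 a) -> lp_above p t1 e -> 0 < rho ->
  exists z rho', [/\ lp_above p t z, 0 < rho', rho' <= rho, d e z < 2 * C * rho &
    forall w, lp_above p t w -> d z w < rho' -> ~ E w].
Proof.
move=> lam0 Ee lt t0 W1 lamW m0 Wt ae rho0; have le := ae.1.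
have C0 : 0 < C by rewrite powR_gt0.
have Wp0 : 0 < W `^ p by rewrite powR_gt0 // (lt_le_trans ltr01 W1).
pose delta := Num.min (m `^ p) rho.
have delta0 : 0 < delta by rewrite lt_min powR_gt0.
have delta_m : delta <= m `^ p by rewrite ge_min lexx.
have delta_rho : delta <= rho by rewrite ge_min lexx orbT.
have [y [ly dey yne hole]] := Ee _ (powR_gt0 (p^-1) delta0).
rewrite (lpdist_ltE p_gt0) ?powR_ge0 // (powRVpK p_gt0) ?(ltW delta0) // in dey.
have de0 : 0 < d e y by apply: (lpdistp_gt0 p_gt0 le ly) => ye; exact: yne (esym ye).
have [z az dyz] := project_to_threshold lt t0 W1 m0 Wt ae ly
  (lt_le_trans dey delta_m).
have dyz_rho : d y z < rho.
  apply: le_lt_trans dyz (lt_le_trans _ delta_rho).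
  apply: le_lt_trans dey; rewrite ler_piMl ?lpdistp_ge0 // invf_le1 //.
  by have := ler_powRp p_gt0 _ _ ler01 W1; rewrite powR1.
have CW : C * (W `^ p)^-1 <= lam `^ p / 2.
  by rewrite ler_pdivlMr // mulrAC ler_pdivrMr // mulrC.
pose rho' := Num.min rho (lam `^ p * d e y / (2 * C)).
have rho'_hole : rho' <= lam `^ p * d e y / (2 * C) by rewrite ge_min lexx orbT.
exists z, rho'; split => //.
- by rewrite lt_min rho0 /= divr_gt0 ?mulr_gt0 ?powR_gt0.
- by rewrite ge_min lexx.
- by apply: (lpdistp_lt_trans p_gt0 le ly az.1) => //; exact: lt_le_trans dey delta_rho.
move=> w [lw _] dzw Ew; apply: (hole w lw _ Ew).
apply: (lpdist_lt_mul p_gt0 lam0).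
apply: le_lt_trans (lpdistp_triangle p_gt0 ly az.1 lw) _.
have dzw' : d z w < lam `^ p * d e y / (2 * C) := lt_le_trans dzw rho'_hole.
have : C * d y z <= lam `^ p * d e y / 2.
  apply: le_trans (_ : C * ((W `^ p)^-1 * d e y) <= _); first by rewrite ler_pM2l.
  by rewrite mulrA [_ * d e y / 2]mulrAC ler_wpM2r ?lpdistp_ge0.
rewrite mulrDr; move: dzw'; rewrite ltr_pdivlMr ?mulr_gt0 //; lra.
Qed.

Lemma porous_avoid_step {E} {lam : R} {t x} {r eps : R} : 0 < lam -> porous p lam E ->
    lp p A t -> (forall a, 0 <= t a) -> lp_above p t x -> 0 < r -> 0 < eps ->
  exists t' x' rho', [/\ (forall a, t a <= t' a), lp p A t', lp_above p t' x',
    0 < rho' & rho' <= eps] /\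
    (forall w, lp p A w -> d x' w < rho' -> d x w < r) /\
    (forall w, lp_above p t' w -> d x' w < rho' -> ~ E w).
Proof.
move=> lam0 porE lt t0 ax r0 e0; have lx := ax.1.
pose c := 2 * C.
have c1 : 1 <= c by rewrite (le_trans (powR2_ge1 p_gt0)) // ler_peMl ?powR_ge0 ?ler1n.
have c_mono s : 0 <= s -> s <= c * s by move=> s0; rewrite ler_peMl.
pose tau := Num.min eps (r / (c * (c * c))).
have tau0 : 0 < tau by rewrite lt_min e0 divr_gt0 ?mulr_gt0 // (lt_le_trans ltr01 c1).
have tau_eps : tau <= eps by rewrite ge_min lexx.
have tau_r : c * (c * (c * tau)) <= r.
  have -> : c * (c * (c * tau)) = tau * (c * (c * c)) by ring.
  by rewrite -ler_pdivlMr ?mulr_gt0 ?(lt_le_trans ltr01 c1) // ge_min lexx orbT.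
have tau_c2 : tau <= c * (c * tau).
  by rewrite (le_trans (c_mono _ (ltW tau0))) // ler_pM2l ?c_mono ?(ltW tau0) ?(lt_le_trans ltr01 c1).
(* large enough for the projection error to fit in half the porosity hole *)
pose W := (c / lam `^ p) `^ p^-1 + 1.
have W1 : 1 <= W by rewrite lerDr powR_ge0.
have lamW : c <= lam `^ p * W `^ p.
  rewrite -ler_pdivrMl ?powR_gt0 // mulrC -[c / _](powRVpK p_gt0) ?divr_ge0 ?powR_ge0 //.
    by rewrite (ler_powRp p_gt0) ?powR_ge0 // lerDl.
  exact: le_trans ler01 c1.
have [t1 [m [m0 lt1 tt1 Wt dt1]]] := raise_threshold lt t0 W1 tau0.
have [x1 ax1 dxx1] := lift_to_threshold lt1 t0 tt1 ax.
rewrite -dxx1 in dt1.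
have [[e Ee [ae dx1e]]|noE] := pselect (exists2 e, E e & lp_above p t1 e /\ d x1 e < tau).
  have [z [rho' [az rho'0 rho'_tau dez avoid]]] :=
    porous_hole_above lam0 (porE e Ee) lt t0 W1 lamW m0 Wt ae tau0.
  exists t, z, rho'; split; first by split => //; exact: le_trans rho'_tau tau_eps.
  split => // w lw dzw.
  have dxe := lpdistp_lt_trans p_gt0 lx ax1.1 ae.1 dt1 dx1e.
  have dxz := lpdistp_lt_trans p_gt0 lx ae.1 az.1 dxe dez.
  apply: lt_le_trans tau_r; apply: (lpdistp_lt_trans p_gt0 lx az.1 lw dxz).
  exact: lt_le_trans dzw (le_trans rho'_tau tau_c2).
exists t1, x1, tau; split => //; split => [w lw dx1w|w aw dx1w Ew].
  apply: lt_le_trans (lpdistp_lt_trans p_gt0 lx ax1.1 lw dt1 dx1w) (le_trans _ tau_r).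
  by rewrite ler_pM2l.
by apply: noE; exists w.
Qed.

End lp_porous.

Section lp_not_sigma_porous.
Context {R : realType} {p : R} {A : choiceType}.
Hypothesis p_gt0 : 0 < p.

Local Notation C := (2 `^ p : R).
Local Notation d := (lpdistp p).

Lemma elpdistp_le_pointwise_lim {y xl : A -> R} {xs : nat -> A -> R} {B B' : R} :
    0 < B' -> (forall j, (elpdistp p y (xs j) <= B%:E)%E) ->
    (forall a j, `|xl a - xs j a| <= j.+1%:R^-1) ->
  (elpdistp p y xl <= (C * (B + B'))%:E)%E.
Proof.
move=> B'0 yB xsl; apply: ge_ereal_sup => _ [X [finX _] <-] /=.
pose N := \sum_(a \in X) (1 : R).
have N1 : 0 < N + 1 by rewrite ltr_wpDl ?fsumr_ge0.
pose e := B' / (N + 1).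
have e0 : 0 < e by rewrite divr_gt0.
have [j _ je] := exists_invS_le 0 (powR_gt0 p^-1 e0).
have sumX : \sum_(a \in X) `|y a - xs j a| `^ p <= B.
  rewrite -lee_fin -fsumEFin //; apply: le_trans (yB j).
  by apply: ereal_sup_ubound; exists X.
apply: (@le_trans _ _ (\sum_(a \in X) (C * (`|y a - xs j a| `^ p + e))%:E)%E).
  apply: lee_fsum => // a _; rewrite lee_fin.
  apply: le_trans (_ : _ <= C * (`|y a - xs j a| `^ p + `|xs j a - xl a| `^ p)) _.
    by have := normD_powR_le p (y a - xs j a) (xs j a - xl a) (ltW p_gt0); rewrite addrA subrK.
  rewrite ler_wpM2l ?powR_ge0 // lerD2l -(powRVpK p_gt0 (ltW e0)).
  by apply: (ler_powRp p_gt0) => //; rewrite distrC (le_trans (xsl a j)).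
rewrite fsumEFin // lee_fin -mulr_fsumr fsbig_split // fsumr_cst -/N.
rewrite ler_wpM2l ?powR_ge0 // lerD // /e mulrAC ler_pdivrMr // ler_pM2l //.
by rewrite lerDl.
Qed.

Lemma ler_pdiv4powR2 (r : R) : 0 <= r -> r / (4 * C) <= r.
Proof.
move=> r0; have C1 := powR2_ge1 p_gt0.
rewrite ler_pdivrMr ?mulr_gt0 ?(lt_le_trans ltr01 C1) // ler_peMr //.
by rewrite (le_trans C1) // ler_peMl ?(le_trans ler01 C1) ?ler1n.
Qed.

Lemma lpdistp_nested_chain {x : nat -> A -> R} {rho s : nat -> R} :
    (forall k, lp p A (x k)) -> (forall k, 0 < rho k) -> (forall k, s k <= rho k) ->
    (forall k w, lp p A w -> d (x k.+1) w < rho k.+1 -> d (x k) w < s k) ->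
  forall k j, (k < j)%N -> d (x k) (x j) < s k.
Proof.
move=> lx rho0 srho nest.
have in_ball n k : d (x k) (x (k + n)%N) < rho k.
  elim: n k => [k|n IH k]; first by rewrite addn0 lpdistpxx.
  by rewrite addnS -addSn; apply: lt_le_trans _ (srho k); exact: nest.
by move=> k j kj; rewrite -(subnKC kj); apply: nest.
Qed.

Lemma lp_nested_limit {x : nat -> A -> R} {rho : nat -> R} :
    (forall k, lp p A (x k)) -> (forall k, 0 < rho k) ->
    (forall k j, (k < j)%N -> d (x k) (x j) < rho k / (4 * C)) ->
    (forall k, rho k.+1 <= k.+1%:R^-1 `^ p) ->
  exists xl, [/\ lp p A xl, forall k, d (x k) xl < rho k
    & forall a k, `|xl a - x k.+1 a| <= k.+1%:R^-1].
Proof.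
move=> lx rho0 chain rho_inv.
have C0 : 0 < C by rewrite powR_gt0.
have q_le k : rho k / (4 * C) <= rho k by rewrite ler_pdiv4powR2 ?ltW.
have cauchy_a a k j : (k <= j)%N -> `|x j.+1 a - x k.+1 a| <= k.+1%:R^-1.
  rewrite leq_eqVlt => /predU1P[->|kj]; first by rewrite subrr normr0 invr_ge0 ler0n.
  apply/ltW; rewrite -(ltr_powR2r p_gt0) ?invr_ge0 ?ler0n // distrC.
  apply: le_lt_trans (lpdistp_term_le p_gt0 (lx _) (lx _) a) _.
  exact: lt_le_trans (chain k.+1 j.+1 kj) (le_trans (q_le _) (rho_inv k)).
have /choice[xl xlP] : forall a, exists l : R, forall k, `|l - x k.+1 a| <= k.+1%:R^-1.
  move=> a; apply: cauchy_lim_bound (cauchy_a a) _ => e e0.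
  have [k _ ke] := exists_invS_le 0 (divr_gt0 e0 (ltr0n _ 2)).
  by exists k; apply: le_lt_trans ke _; rewrite ltr_pdivrMr ?ltr0n // ltr_pMr ?ltr1n.
have Dk k : (elpdistp p (x k) xl <= (rho k / 2)%:E)%E.
  rewrite (_ : rho k / 2 = C * (rho k / (4 * C) + rho k / (4 * C))); last first.
    by field; rewrite gt_eqF.
  apply: (elpdistp_le_pointwise_lim (xs := fun j => x (j + k).+1)) => [|j|a j].
  - by rewrite divr_gt0 ?mulr_gt0.
  - by rewrite lpdistpE // lee_fin ltW // chain // ltnS leq_addl.
  apply: le_trans (xlP a (j + k)) _.
  by rewrite lef_pV2 ?posrE ?ltr0Sn // ler_nat ltnS leq_addr.
have lxl : lp p A xl.
  apply/lp_elpdistp0; apply: le_lt_trans (elpdistp_triangle p_gt0 xl (x 0%N) _) _.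
  apply: lte_mul_pinfty; rewrite ?lee_fin ?powR_ge0 //; apply: lte_add_pinfty.
    by rewrite elpdistpC; apply: le_lt_trans (Dk 0%N) (ltry _).
  exact: (iffLR (lp_elpdistp0 _) (lx 0%N)).
exists xl; split => // k.
have := Dk k; rewrite lpdistpE // lee_fin => /le_lt_trans; apply.
by rewrite ltr_pdivrMr ?ltr0n // ltr_pMr ?ltr1n.
Qed.

Record stage := Stage { thr : A -> R; ctr : A -> R; rad : R }.

Definition stage_ok (t : A -> R) (s : stage) :=
  [/\ 0 < rad s, forall a, t a <= thr s a, lp p A (thr s) & lp_above p (thr s) (ctr s)].

(* Nesting into radius [rad s / (4 * C)] leaves room for the quasi-triangle
   constant when passing to the limit (see [lp_nested_limit]). *)
Definition stage_next (E : set (A -> R)) (eps : R) (s s' : stage) :=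
  [/\ forall a, thr s a <= thr s' a, rad s' <= eps,
      forall w, lp p A w -> d (ctr s') w < rad s' -> d (ctr s) w < rad s / (4 * C)
    & forall w, lp_above p (thr s') w -> d (ctr s') w < rad s' -> ~ E w].

Lemma nested_stages {t} {lam : R} {En : nat -> set (A -> R)} :
    0 < lam -> (forall n, porous p lam (En n)) -> lp p A t -> (forall a, 0 <= t a) ->
  exists s : nat -> stage, forall n,
    stage_ok t (s n) /\ stage_next (En n) (n.+1%:R^-1 `^ p) (s n) (s n.+1).
Proof.
move=> lam0 porE lt t0; have C0 : 0 < C by rewrite powR_gt0.
have step (ns : nat * stage) : exists s', stage_ok t ns.2 ->
    stage_ok t s' /\ stage_next (En ns.1) (ns.1.+1%:R^-1 `^ p) ns.2 s'.
  case: ns => n s; have [[rho0 ts lts axs]|nok] := pselect (stage_ok t s); last by exists s.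
  have ts0 a : 0 <= thr s a := le_trans (t0 a) (ts a).
  have inv0 : 0 < n.+1%:R^-1 :> R by rewrite invr_gt0.
  have [t' [x' [rho' [[tt' lt' ax' rho'0 rho'_eps] [nest avoid]]]]] :=
    porous_avoid_step p_gt0 lam0 (porE n) lts ts0 axs (divr_gt0 rho0 (mulr_gt0 (ltr0n _ 4) C0))
      (powR_gt0 p inv0).
  exists (Stage t' x' rho') => _; split; split => //= a.
  exact: le_trans (ts a) (tt' a).
have [f fP] := choice step.
pose s := fix s n := if n is m.+1 then f (m, s m) else Stage t t 1.
have ok n : stage_ok t (s n).
  elim: n => [|n IH]; last exact: (fP (n, s n) IH).1.
  by split => //=; split => // a; rewrite ler_norm.
by exists s => n; split => //; exact: (fP (n, s n) (ok n)).2.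
Qed.

Lemma lp_above_not_porous_cover {t} {lam : R} {En : nat -> set (A -> R)} :
    0 < lam -> (forall n, porous p lam (En n)) -> lp p A t -> (forall a, 0 <= t a) ->
  exists2 x, lp_above p t x & forall n, ~ En n x.
Proof.
move=> lam0 porE lt t0.
have [s sP] := nested_stages lam0 porE lt t0.
have lx k : lp p A (ctr (s k)) by case: (sP k).1 => _ _ _ [].
have rad0 k : 0 < rad (s k) by case: (sP k).1.
have rad_inv k : rad (s k.+1) <= k.+1%:R^-1 `^ p by case: (sP k).2.
have nest k w : lp p A w -> d (ctr (s k.+1)) w < rad (s k.+1) ->
    d (ctr (s k)) w < rad (s k) / (4 * C) by case: (sP k).2 => _ _ /(_ w).
have chain := lpdistp_nested_chain lx rad0 (fun k => ler_pdiv4powR2 _ (ltW (rad0 k))) nest.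
have [xl [lxl dxl xlP]] := lp_nested_limit lx rad0 chain rad_inv.
have above k a : thr (s k) a <= `|xl a|.
  apply: (le_norm_pointwise_lim (fun k => thr (s k) a) (fun k => ctr (s k) a)) => // j.
    by case: (sP j).2.
  by case: (sP j).1 => _ _ _ [].
exists xl; first by split => // a; apply: le_trans (above 0%N a); case: (sP 0%N).1.
move=> n Enxl; case: (sP n).2 => _ _ _ avoid.
by apply: (avoid xl) Enxl; [split => // a; exact: above | exact: dxl].
Qed.

End lp_not_sigma_porous.

Theorem corollary2p6 (R : realType) (p : R) (A : choiceType)
    (hp : 1 <= p) (hA : [set: A] !=set0) (g : A -> R) (hg : lp p A g) :
  forall lam : R, 0 < lam < 1 -> ~ sigma_porous p lam (Gamma p g).
Proof.
move=> lam /andP[lam0 _] [En [_ [porE GammaE]]].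
have lg : lp p A (fun a => `|g a|) by rewrite /lp /=; under eq_esum do rewrite normr_id.
have [x Gx notE] := lp_above_not_porous_cover (lt_le_trans ltr01 hp) lam0 porE lg
  (fun a => normr_ge0 (g a)).
have : Gamma p g x := Gx.
by rewrite GammaE => -[n _]; exact: notE.
Qed.
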